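(* Let ${\cal D}_{xy}'$ be the set of directions obtained by rotating ${\cal D}_{xy}=\{(0,1),(1,0),(0,-1),(-1,0)\}$ by $45$ degrees, and let $N$ be a set of $n$ points chosen uniformly and independently from the unit (axis-parallel) square. Then the expected complexity (number of vertices) of $\mathcal{CH}_{{\cal D}_{xy}'}(N)$ is $\Omega(\sqrt{n})$.
   Context: A set of directions is a set ${\cal D}$ of unit vectors in $\mathbb{R}^2$ such that $v\in{\cal D}$ implies $-v\in{\cal D}$. A pair $v_1,v_2\in{\cal D}$ is a ${\cal D}$-pair if $v_2$ is counterclockwise from $v_1$ and no vector of ${\cal D}$ lies strictly between them. With $\mathrm{pspan}(u_1,u_2)$ the open wedge of positive linear combinations of $u_1,u_2$, ${\cal Q}({\cal D})$ consists of the two open half-planes bounded by the line through the origin in direction $v$, for each $v\in{\cal D}$, together with $\mathrm{pspan}(-v_1,v_2)$ and $\mathrm{pspan}(v_1,-v_2)$ for each ${\cal D}$-pair $(v_1,v_2)$; ${\cal T}({\cal D})$ is the set of all translates of members of ${\cal Q}({\cal D})$, and $\mathcal{CH}_{{\cal D}}(S)=\mathbb{R}^2\setminus\bigcup\{I\in{\cal T}({\cal D}) : I\cap S=\emptyset\}$. *)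

From HB Require Import structures.
From mathcomp Require Import all_boot all_order all_algebra.
From mathcomp Require Import all_classical all_reals all_analysis.
From mathcomp Require Import finmap.
Set Implicit Arguments.
Unset Strict Implicit.
Unset Printing Implicit Defensive.
Import Order.TTheory GRing.Theory Num.Theory.
Local Open Scope classical_set_scope.
Local Open Scope ring_scope.

Section Defs.
Variable R : realType.
Notation pt := (R * R)%type.

Definition padd (p q : pt) : pt := (p.1 + q.1, p.2 + q.2).
Definition pscale (a : R) (p : pt) : pt := (a * p.1, a * p.2).
Definition popp (p : pt) : pt := (- p.1, - p.2).
Definition cross (u v : pt) : R := u.1 * v.2 - u.2 * v.1.
Definition sqdist (p q : pt) : R := (p.1 - q.1) ^+ 2 + (p.2 - q.2) ^+ 2.
Definition unit_vec (v : pt) : Prop := v.1 ^+ 2 + v.2 ^+ 2 = 1.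

Definition rot (t : R) (v : pt) : pt :=
  (cos t * v.1 - sin t * v.2, sin t * v.1 + cos t * v.2).

Definition directions (D : set pt) : Prop :=
  (forall v, D v -> unit_vec v) /\ (forall v, D v -> D (popp v)).

Definition ccw_from (v1 v2 : pt) : Prop :=
  exists t, 0 < t < 2 * pi /\ v2 = rot t v1.

Definition strictly_between (v1 w v2 : pt) : Prop :=
  exists s t, 0 < s < t /\ t < 2 * pi /\ w = rot s v1 /\ v2 = rot t v1.

Definition Dpair (D : set pt) (v1 v2 : pt) : Prop :=
  D v1 /\ D v2 /\ ccw_from v1 v2 /\ ~ (exists w, D w /\ strictly_between v1 w v2).

Definition pspan (u1 u2 : pt) : set pt :=
  [set x | exists a b, 0 < a /\ 0 < b /\ x = padd (pscale a u1) (pscale b u2)].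

Definition halfplane_l (v : pt) : set pt := [set x | 0 < cross v x].
Definition halfplane_r (v : pt) : set pt := [set x | cross v x < 0].

Definition Qset (D : set pt) : set (set pt) :=
  [set I | (exists v, D v /\ (I = halfplane_l v \/ I = halfplane_r v)) \/
           (exists v1 v2, Dpair D v1 v2 /\
              (I = pspan (popp v1) v2 \/ I = pspan v1 (popp v2)))].

Definition translate (p : pt) (A : set pt) : set pt := [set padd p x | x in A].

Definition Tset (D : set pt) : set (set pt) :=
  [set J | exists p I, Qset D I /\ J = translate p I].

Definition CH (D : set pt) (S : set pt) : set pt :=
  ~` \bigcup_(I in [set I | Tset D I /\ I `&` S = set0]) I.

Definition boundary (A : set pt) : set pt :=
  [set p | forall r, 0 < r ->
     (exists q, A q /\ sqdist p q < r ^+ 2) /\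
     (exists q, ~ A q /\ sqdist p q < r ^+ 2)].

Definition vertex (A : set pt) : set pt :=
  [set p | boundary A p /\
     ~ (exists r d, 0 < r /\ d != (0, 0) /\
          forall q, sqdist p q < r ^+ 2 ->
            (boundary A q <-> exists t, q = padd p (pscale t d)))].

Definition complexity (A : set pt) : \bar R :=
  if `[< finite_set (vertex A) >] then ((#|` fset_set (vertex A)|)%fset%:R)%:E
  else +oo%E.

Definition Dxy : set pt := [set (0, 1); (1, 0); (0, -1); (-1, 0)].
Definition Dxy' : set pt := rot (pi / 4) @` Dxy.

Definition unitI : set R := `[0, 1]%classic.

(* expectation of f (list of n points) for n points drawn independently and
   uniformly from [0,1]^2, as an iterated Lebesgue integral *)
Fixpoint unif_exp (n : nat) (f : seq pt -> \bar R) : \bar R :=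
  match n with
  | 0 => f [::]
  | n'.+1 =>
      (\int[@lebesgue_measure R]_(x in unitI)
         \int[@lebesgue_measure R]_(y in unitI)
            unif_exp n' (fun s => f ((x, y) :: s)))%E
  end.

Definition point_set (s : seq pt) : set pt := [set p | p \in s].

End Defs.

From Pilot Require Import Defs.
From HB Require Import structures.
From mathcomp Require Import all_boot all_order all_algebra.
From mathcomp Require Import all_classical all_reals all_analysis.
From mathcomp Require Import ring lra zify.
Set Implicit Arguments.
Unset Strict Implicit.
Unset Printing Implicit Defensive.
Import Order.TTheory GRing.Theory Num.Theory.
Local Open Scope classical_set_scope.
Local Open Scope ring_scope.

(* The translates of the wedge [pspan (-dir_se) dir_ne], i.e. the upward
   quarter planes [{z | |z.1 - a.1| < z.2 - a.2}], belong to [Tset Dxy'], so the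
   hull contains no point of such a wedge that misses the sample.  Consequently
   the highest sample point in the closed upward wedge of a sample point [p] is
   a vertex of the hull, and it lies horizontally close to [p] when [p] is near
   the top side of the square.  Cut the top of the square into [m ~ sqrt n]
   columns of width [w = 1/m], each containing a box of area [w^2/16 >= 1/(16n)]:
   distinct hit boxes yield distinct vertices, and each box is hit with
   probability [1 - (1 - w^2/16)^n >= 1/17], so the expected complexity is at
   least [m/17 >= sqrt n / 34]. *)

Section UpwardWedge.
Variable R : realType.
Notation pt := (R * R)%type.

Definition c45 : R := cos (pi / 4).

Lemma c45_gt0 : 0 < c45.
Proof. by apply: cos_gt0_pihalf; have := pi_gt0 R; lra. Qed.

Lemma sin_pi4 : sin (pi / 4) = c45.
Proof. by rewrite /c45 -cosBpihalf -cosN; congr cos; lra. Qed.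

Definition dir_se : pt := (c45, - c45).
Definition dir_ne : pt := (c45, c45).

Lemma Dxy'E w : Dxy' w <->
  [\/ w = (- c45, c45), w = dir_ne, w = dir_se | w = (- c45, - c45)].
Proof.
have rotE (u : pt) : Defs.rot (pi / 4) u = (c45 * (u.1 - u.2), c45 * (u.1 + u.2)).
  by rewrite /Defs.rot sin_pi4 /c45; congr pair; ring.
split.
  case=> u Du <-; rewrite rotE.
  by case: Du => [[[->|->]|->]|->] /=;
    [constructor 1|constructor 2|constructor 3|constructor 4]; congr pair; ring.
rewrite /dir_ne /dir_se; case=> ->.
- by exists (0, 1); [left; left; left | rewrite rotE /=; congr pair; ring].
- by exists (1, 0); [left; left; right | rewrite rotE /=; congr pair; ring].
- by exists (0, -1); [left; right | rewrite rotE /=; congr pair; ring].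
- by exists (-1, 0); [right | rewrite rotE /=; congr pair; ring].
Qed.

Lemma rot_dir_se (t : R) :
  Defs.rot t dir_se = (c45 * (cos t + sin t), c45 * (sin t - cos t)).
Proof. by rewrite /Defs.rot /dir_se /=; congr pair; ring. Qed.

Lemma angle_eq_pihalf (t : R) :
  0 < t < 2 * pi -> sin t = 1 -> cos t = 0 -> t = pi / 2.
Proof.
move=> /andP[t0 t2] st ct; have pi0 := pi_gt0 R.
have [tpi|tpi] := leP t pi.
  by apply: cos_inj; rewrite ?in_itv /= ?ct ?cos_pihalf //; apply/andP; split; lra.
have : 0 < sin (t - pi) by apply: sin_gt0_pi; apply/andP; split; lra.
by rewrite -[t in sin t](subrK pi) sinDpi in st; lra.
Qed.

Lemma Dpair_se_ne : Dpair (@Dxy' R) dir_se dir_ne.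
Proof.
have c0 := c45_gt0; have pi0 := pi_gt0 R.
have scale1 x : c45 * x = c45 -> x = 1.
  by move=> h; apply: (mulfI (lt0r_neq0 c0)); rewrite h mulr1.
split; first by apply/Dxy'E; constructor 3.
split; first by apply/Dxy'E; constructor 2.
split.
  exists (pi / 2); split; first by apply/andP; split; lra.
  by rewrite rot_dir_se cos_pihalf sin_pihalf; congr pair; ring.
case=> w [Dw [s [t [/andP[s0 st] [t2 [wE]]]]]].
rewrite {w}wE rot_dir_se in Dw; rewrite rot_dir_se => -[/esym/scale1 ct /esym/scale1 st1].
have tE : t = pi / 2 by apply: angle_eq_pihalf; [apply/andP; split|..]; lra.
have cs : 0 < cos s by apply: cos_gt0_pihalf; apply/andP; split; lra.
have ss : 0 < sin s by apply: sin_gt0_pihalf; apply/andP; split; lra.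
have sum_gt0 : 0 < c45 * (cos s + sin s) by apply: mulr_gt0; lra.
case/Dxy'E: Dw => -[a b]; [lra | | | lra].
- by have := scale1 _ a; have := scale1 _ b; lra.
- have := scale1 _ a; have : c45 * (sin s - cos s) = c45 * -1 by rewrite mulrN1.
  by move/(mulfI (lt0r_neq0 c0)); lra.
Qed.

Definition upcone (a : pt) : set pt := translate a (pspan (popp dir_se) dir_ne).

Lemma upconeE a z : upcone a z <-> a.2 + `|z.1 - a.1| < z.2.
Proof.
have c0 := c45_gt0.
split.
  case=> v [al [be [al0 [be0 ->]]]] <- /=.
  have -> : a.1 + (al * - c45 + be * c45) - a.1 = c45 * (be - al) by ring.
  rewrite normrM (gtr0_norm c0).
  by have [h|h] := lerP 0 (be - al); [rewrite (ger0_norm h)|rewrite (ltr0_norm h)]; nra.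
case: z => z1 z2 /=; set X := z1 - a.1; set Y := z2 - a.2 => h.
have /andP[hX1 hX2] : - Y < X < Y by rewrite -ltr_norml /Y; lra.
exists (padd (pscale ((Y - X) / (2 * c45)) (popp dir_se))
             (pscale ((Y + X) / (2 * c45)) dir_ne)).
  by exists ((Y - X) / (2 * c45)), ((Y + X) / (2 * c45));
    split; [|split=> //]; apply: divr_gt0; lra.
by rewrite /padd /pscale /popp /dir_se /dir_ne /= /X /Y; congr pair; field; lra.
Qed.

Lemma Tset_upcone a : Tset (@Dxy' R) (upcone a).
Proof.
exists a, (pspan (popp dir_se) dir_ne); split => //.
by right; exists dir_se, dir_ne; split; [exact: Dpair_se_ne | left].
Qed.

Lemma sub_CH (D S : set pt) : S `<=` CH D S.
Proof. by move=> p Sp [I [_ IS] Ip]; have : (I `&` S) p by []; rewrite IS. Qed.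

Lemma notin_CH_upcone (S : set pt) a z : (forall q, S q -> ~ upcone a q) ->
  upcone a z -> ~ CH (@Dxy' R) S z.
Proof.
move=> hS hz; apply; exists (upcone a) => //; split; first exact: Tset_upcone.
by apply/seteqP; split => // q [/[swap] /hS].
Qed.

Lemma upcone_nbhs a z : upcone a z -> exists2 r : R, 0 < r &
  forall z', sqdist z z' < r ^+ 2 -> upcone a z'.
Proof.
move/upconeE => h; exists ((z.2 - a.2 - `|z.1 - a.1|) / 2); first lra.
move=> z'; rewrite /sqdist => hd; apply/upconeE.
have sq_lt x : x ^+ 2 < ((z.2 - a.2 - `|z.1 - a.1|) / 2) ^+ 2 ->
    `|x| < (z.2 - a.2 - `|z.1 - a.1|) / 2.
  by rewrite -(real_normK (num_real x)) => hx; have := normr_ge0 x; nra.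
have h1 := sq_lt (z.1 - z'.1) ltac:(have := sqr_ge0 (z.2 - z'.2); lra).
have h2 := sq_lt (z.2 - z'.2) ltac:(have := sqr_ge0 (z.1 - z'.1); lra).
have := ler_normD (z.1 - a.1) (z'.1 - z.1).
rewrite distrC in h1; have := ler_norm (z.2 - z'.2).
have -> : z.1 - a.1 + (z'.1 - z.1) = z'.1 - a.1 by ring.
lra.
Qed.

Lemma empty_upcone_not_boundary (S : set pt) a z :
  (forall q, S q -> ~ upcone a q) -> upcone a z ->
  ~ boundary (CH (@Dxy' R) S) z.
Proof.
move=> hS /upcone_nbhs[r r0 hr] /(_ r r0)[[q [CHq /hr Wq]] _].
exact: notin_CH_upcone hS Wq CHq.
Qed.

End UpwardWedge.

Section ConePeak.
Variable R : realType.
Notation pt := (R * R)%type.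
Implicit Types (S : set pt) (p : pt) (d x y : R).

(* Every point of [S] other than [p] lies at least [d] below the graph of
   [x |-> p.2 + |x - p.1|], the boundary of the upward wedge with apex [p]. *)
Definition cone_peak S p d :=
  S p /\ forall q, S q -> q <> p -> q.2 - p.2 + d <= `|q.1 - p.1|.

Lemma cone_peak_empty_upcone S p d x y : cone_peak S p d ->
  - `|x| < y -> 2 * `|x| <= d ->
  exists a : pt, (forall q, S q -> ~ upcone a q) /\ upcone a (p.1 + x, p.2 + y).
Proof.
move=> [Sp hd] hy hx; exists (p.1 + x, p.2 - `|x|); split; last first.
  by apply/upconeE => /=; rewrite subrr normr0; lra.
move=> q Sq /upconeE /= hq; have [qp|qp] := eqVneq q p.
  by move: hq; rewrite qp opprD addrA subrr add0r normrN; lra.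
have := hd q Sq (elimN eqP qp); have := ler_normD (q.1 - (p.1 + x)) x.
have -> : q.1 - (p.1 + x) + x = q.1 - p.1 by ring.
lra.
Qed.

Lemma cone_peak_boundary_below S p d x y : cone_peak S p d -> 2 * `|x| <= d ->
  boundary (CH (@Dxy' R) S) (p.1 + x, p.2 + y) -> y <= - `|x|.
Proof.
move=> hp hx bd; rewrite leNgt; apply/negP => hy.
have [a [hS ha]] := cone_peak_empty_upcone hp hy hx.
exact: empty_upcone_not_boundary hS ha bd.
Qed.

Lemma cone_peak_boundary S p d : cone_peak S p d -> 0 < d ->
  boundary (CH (@Dxy' R) S) p.
Proof.
move=> hp d0 r r0; split.
  by exists p; split; [exact: sub_CH hp.1 | rewrite /sqdist !subrr; nra].
exists (p.1 + 0, p.2 + r / 2); split; last by rewrite /sqdist /=; nra.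
have [|//|a [hS ha]] := cone_peak_empty_upcone (x := 0) (y := r / 2) hp.
- by rewrite normr0; lra.
- by rewrite normr0; lra.
exact: notin_CH_upcone hS ha.
Qed.

Lemma cone_peak_vertex S p d : cone_peak S p d -> 0 < d ->
  vertex (CH (@Dxy' R) S) p.
Proof.
move=> hp d0; split; first exact: cone_peak_boundary hp d0.
case=> r [[d1 d2] [r0 [dn0 onLine]]].
have K0 : 0 < `|d1| + `|d2|.
  have := normr_ge0 d1; have := normr_ge0 d2.
  by case/nandP: dn0; rewrite -normr_gt0; lra.
(* If the boundary near [p] were a line of direction [(d1, d2)], both
   [p + t (d1, d2)] and [p - t (d1, d2)] would be boundary points, hence both
   below the downward wedge at [p]: this forces [t (d1, d2) = 0]. *)
pose t := Num.min r d / (2 * (`|d1| + `|d2|)).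
have t0 : 0 < t by apply: divr_gt0; rewrite ?lt_min ?r0 ?d0; lra.
have tK : `|t * d1| + `|t * d2| = Num.min r d / 2.
  by rewrite (normrM t d1) (normrM t d2) (gtr0_norm t0) -mulrDr /t; field; lra.
have [mr md] : Num.min r d <= r /\ Num.min r d <= d.
  by split; rewrite ge_min lexx ?orbT.
have bd (u : R) : `|u| = t -> 2 * `|u * d1| <= d /\
    boundary (CH (@Dxy' R) S) (p.1 + u * d1, p.2 + u * d2).
  move=> ut.
  have e1 : `|u * d1| = `|t * d1| by rewrite (normrM u) (normrM t) ut (gtr0_norm t0).
  have e2 : `|u * d2| = `|t * d2| by rewrite (normrM u) (normrM t) ut (gtr0_norm t0).
  have := normr_ge0 (t * d1); have := normr_ge0 (t * d2).
  split; first by rewrite e1; lra.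
  apply/(onLine _ _).2; last by exists u.
  rewrite /sqdist /= !opprD !addrA !subrr !add0r !sqrrN.
  rewrite -(real_normK (num_real (u * d1))) -(real_normK (num_real (u * d2))) e1 e2.
  nra.
have [h1 b1] := bd t (gtr0_norm t0).
have [h2 b2] := bd (- t) ltac:(by rewrite normrN gtr0_norm).
have := cone_peak_boundary_below hp h1 b1.
have := cone_peak_boundary_below hp h2 b2.
rewrite !mulNr !normrN => below_minus below_plus.
have td1_0 : `|t * d1| = 0 by have := normr_ge0 (t * d1); lra.
have td2_0 : t * d2 = 0 by lra.
have : 0 < Num.min r d by rewrite lt_min r0 d0.
by move: tK; rewrite td2_0 td1_0 normr0; lra.
Qed.

End ConePeak.

Section FinitePointSets.
Variable R : realType.
Notation pt := (R * R)%type.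

Lemma exists_seq_argmax (T : eqType) (f : T -> R) (s : seq T) x : x \in s ->
  exists2 y, y \in s & forall z, z \in s -> f z <= f y.
Proof.
elim: s x => // a s IH x _; case: s IH => [|b s] IH.
  by exists a => [|z]; rewrite ?mem_seq1 ?eqxx // => /eqP ->.
have [y ys hy] := IH b (mem_head _ _).
have [ay|ya] := leP (f a) (f y).
  by exists y => [|z]; rewrite inE ?ys ?orbT // => /orP[/eqP ->|/hy].
exists a => [|z]; first exact: mem_head.
by rewrite inE => /orP[/eqP -> //|/hy]; lra.
Qed.

Lemma exists_seq_pos_lbound (T : eqType) (f : T -> R) (s : seq T) :
  (forall x, x \in s -> 0 < f x) -> exists2 e, 0 < e & forall x, x \in s -> e <= f x.
Proof.
elim: s => [|a s IH] fs0; first by exists 1.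
have [x xs|e e0 he] := IH; first by apply: fs0; rewrite inE xs orbT.
exists (Num.min e (f a)); first by rewrite lt_min e0 fs0 ?mem_head.
by move=> x; rewrite inE ge_min => /orP[/eqP ->|/he ->]; rewrite ?lexx ?orbT.
Qed.

(* The highest point [q] of [s] in the upward wedge with apex [p] is a cone
   peak, hence a hull vertex, and it sits within [eps] of [p] horizontally as
   it cannot rise above height 1. *)
Lemma vertex_CH_near (s : seq pt) p (eps : R) : p \in s ->
  (forall q, q \in s -> q.2 <= 1) -> 1 - eps <= p.2 ->
  exists v, vertex (CH (@Dxy' R) (point_set s)) v /\ `|v.1 - p.1| <= eps.
Proof.
move=> ps s1 pe.
pose above := [pred q : pt | `|q.1 - p.1| <= q.2 - p.2].
have abovep : p \in [seq q <- s | above q] by rewrite mem_filter inE !subrr normr0 lexx.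
have [q] := exists_seq_argmax snd abovep; rewrite mem_filter => /andP[Pq qs] hq.
have gap q' : q' \in [seq q' <- s | q' != q] -> 0 < `|q'.1 - q.1| - (q'.2 - q.2).
  rewrite mem_filter /= => /andP[q'q q's]; rewrite subr_gt0 ltNge; apply/negP => h.
  have Pq' : above q'.
    have := ler_normD (q'.1 - q.1) (q.1 - p.1).
    have -> : q'.1 - q.1 + (q.1 - p.1) = q'.1 - p.1 by ring.
    by move: Pq; rewrite !inE; lra.
  have := hq q'; rewrite mem_filter Pq' q's => /(_ isT) le.
  have : `|q'.1 - q.1| == 0 by rewrite eq_le normr_ge0; lra.
  have e2 : q'.2 = q.2 by have := normr_ge0 (q'.1 - q.1); lra.
  rewrite normr_eq0 subr_eq0 => /eqP e1.
  by case/eqP: q'q; rewrite [q']surjective_pairing e1 e2 -surjective_pairing.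
have [d d0 hd] := exists_seq_pos_lbound gap.
exists q; split; last by move: Pq => /= Pq; have := s1 q qs; lra.
apply: (cone_peak_vertex (d := d)) => //; split; first exact: qs.
move=> q' q's /eqP q'q; have := hd q'; rewrite mem_filter /= q'q => /(_ q's); lra.
Qed.

Lemma count_le_complexity (A : set pt) (P : pred nat) (col : nat -> pt -> Prop)
    (l : seq nat) : uniq l ->
  (forall j, P j -> exists v, vertex A v /\ col j v) ->
  (forall j k v, col j v -> col k v -> j = k) ->
  ((count P l)%:R%:E <= complexity A)%E.
Proof.
move=> ul hP hcol; rewrite /complexity; case: ifPn => [/asboolP finV|_]; last first.
  by rewrite leey.
rewrite lee_fin ler_nat.
pose g j := xget (0, 0) [set v | vertex A v /\ col j v].
have gP j : P j -> vertex A (g j) /\ col j (g j) by move/hP/(xgetPex (0, 0)).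
have uL : uniq (map g [seq j <- l | P j]).
  rewrite map_inj_in_uniq ?filter_uniq // => j k.
  rewrite !mem_filter => /andP[/gP[_ cj] _] /andP[/gP[_ ck] _] gjk.
  by apply: hcol cj _; rewrite gjk.
rewrite -size_filter -(size_map g); apply: uniq_leq_size uL _.
move=> v /mapP[j]; rewrite mem_filter => /andP[/gP[Vj _] _] ->.
by rewrite in_fset_set // mem_set.
Qed.

Definition in_box (x1 x2 y1 y2 : R) (q : pt) : bool :=
  (x1 <= q.1 <= x2) && (y1 <= q.2 <= y2).

Definition column_box (w : R) (j : nat) : pt -> bool :=
  in_box (j%:R * w + w / 4) (j%:R * w + 3 * w / 4) (1 - w / 8) 1.

Lemma count_column_boxes_le_complexity (w : R) (l : seq nat) (s : seq pt) :
  0 < w -> uniq l -> (forall q, q \in s -> q.2 <= 1) ->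
  ((count (fun j => has (column_box w j) s) l)%:R%:E <=
    complexity (CH (@Dxy' R) (point_set s)))%E.
Proof.
move=> w0 ul s1; apply: (count_le_complexity (col := fun j (v : pt) =>
  j%:R * w + w / 8 <= v.1 <= j%:R * w + 7 * w / 8)) => //.
- move=> j /hasP[p ps /andP[/andP[a b] /andP[c _]]].
  have [v [hv]] := vertex_CH_near (eps := w / 8) ps s1 c.
  by rewrite ler_norml => /andP[h1 h2]; exists v; split => //; apply/andP; split; lra.
- move=> j k v /andP[a b] /andP[c d].
  have lt_succ (i i' : nat) : (i%:R - i'%:R - 1) * w < 0 -> (i <= i')%N.
    by rewrite pmulr_llt0 // -ltnS -(ltr_nat R) -natr1; lra.
  by apply/eqP; rewrite eqn_leq !lt_succ //; lra.
Qed.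

End FinitePointSets.

Section ErealSup.
Local Open Scope ereal_scope.
Variable R : realType.
Implicit Types (A B : set (\bar R)) (x M : \bar R).

Lemma ereal_sup_addr_le A x M : A !=set0 -> (forall a, A a -> 0 <= a) ->
  0 <= x -> (forall a, A a -> a + x <= M) -> ereal_sup A + x <= M.
Proof.
move=> [a0 Aa0] A0; case: x => [r||] // r0 hA.
  by rewrite -leeBrDr //; apply: ge_ereal_sup => a Aa; rewrite leeBrDr //; exact: hA.
have := hA a0 Aa0; rewrite addey; last by apply: contraTneq (A0 a0 Aa0) => ->.
by rewrite leye_eq => /eqP ->; rewrite leey.
Qed.

Lemma ereal_sup_add_le A B M : A !=set0 -> B !=set0 ->
  (forall a, A a -> 0 <= a) -> (forall b, B b -> 0 <= b) ->
  (forall a b, A a -> B b -> a + b <= M) -> ereal_sup A + ereal_sup B <= M.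
Proof.
move=> An0 Bn0 A0 B0 hAB; rewrite addeC; apply: ereal_sup_addr_le => //.
  by case: An0 => a Aa; exact: le_trans (A0 a Aa) (ereal_sup_ubound Aa).
by move=> b Bb; rewrite addeC; apply: ereal_sup_addr_le => // [|a Aa]; [exact: B0|exact: hAB].
Qed.

End ErealSup.

(* The library's monotonicity and additivity lemmas for integrals assume
   measurability, which is not available for the complexity of a random hull.
   For nonnegative integrands, the integral is a supremum of integrals of
   simple functions below the integrand, and this alone yields monotonicity and
   superadditivity. *)
Section NonmeasurableIntegral.
Local Open Scope ereal_scope.
Import HBNNSimple.
Context d (T : measurableType d) (R : realType).
Variable mu : {measure set T -> \bar R}.
Variable D : set T.
Implicit Types f g : T -> \bar R.

Lemma ge0_le_integral_nonmeas f g : (forall x, D x -> 0 <= f x) ->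
  (forall x, D x -> f x <= g x) ->
  \int[mu]_(x in D) f x <= \int[mu]_(x in D) g x.
Proof.
move=> f0 fg.
have g0 x : D x -> 0 <= g x by move=> Dx; exact: le_trans (f0 x Dx) (fg x Dx).
rewrite !ge0_integralE //; apply: ereal_sup_le => _ [h hf <-]; exists h => //= x.
apply: le_trans (hf x) _; rewrite /patch; case: ifP => // /set_mem Dx.
exact: fg.
Qed.

Lemma ge0_integralD_ge_nonmeas f g : (forall x, D x -> 0 <= f x) ->
  (forall x, D x -> 0 <= g x) ->
  \int[mu]_(x in D) f x + \int[mu]_(x in D) g x <= \int[mu]_(x in D) (f x + g x).
Proof.
move=> f0 g0.
have fg0 x : D x -> 0 <= f x + g x by move=> Dx; rewrite adde_ge0 ?f0 ?g0.
have zero_below k : (forall x, D x -> 0 <= k x) ->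
    [set sintegral mu h | h in [set h : {nnsfun T >-> R} | forall x, (h x)%:E <= (k \_ D) x]]
    !=set0.
  move=> k0; exists (sintegral mu nnsfun0), nnsfun0 => //= x.
  by rewrite /patch; case: ifP => // /set_mem /k0.
rewrite !ge0_integralE //; apply: ereal_sup_add_le.
- exact: zero_below.
- exact: zero_below.
- by move=> _ [h _ <-]; exact: sintegral_ge0.
- by move=> _ [h _ <-]; exact: sintegral_ge0.
move=> _ _ [h1 h1f <-] [h2 h2g <-].
rewrite -sintegralD; apply: ereal_sup_ubound; exists (add_nnsfun h1 h2) => //= x.
have := h1f x; have := h2g x; rewrite /patch EFinD; case: ifP => _ h2x h1x.
  exact: leeD.
by apply: le_trans (leeD h1x h2x) _; rewrite adde0.
Qed.

End NonmeasurableIntegral.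

Section UniformExpectation.
Local Open Scope ereal_scope.
Variable R : realType.
Notation pt := (R * R)%type.
Implicit Types (f g : seq pt -> \bar R) (s : seq pt).

(* [unif_exp] only evaluates its integrand on lists of points with ordinates
   in [0, 1], so side conditions need only hold on such lists. *)
Definition below_one s := all (fun q : pt => (q.2 <= 1)%R) s.

Lemma below_one_cons x y s : unitI y -> below_one s -> below_one ((x, y) :: s).
Proof. by rewrite /unitI /= in_itv /= => /andP[_ ->]. Qed.

Lemma unif_exp_ge0 n f : (forall s, below_one s -> 0 <= f s) ->
  0 <= unif_exp n f.
Proof.
elim: n f => [|n IH] f f0 /=; first exact: f0.
apply: integral_ge0 => x _; apply: integral_ge0 => y Iy.
by apply: IH => s s1; apply/f0/below_one_cons.
Qed.

Lemma le_unif_exp n f g : (forall s, below_one s -> 0 <= f s) ->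
  (forall s, below_one s -> f s <= g s) -> unif_exp n f <= unif_exp n g.
Proof.
elim: n f g => [|n IH] f g f0 fg /=; first exact: fg.
have f0' x y : unitI y -> 0 <= unif_exp n (fun s => f ((x, y) :: s)).
  by move=> Iy; apply: unif_exp_ge0 => s s1; apply/f0/below_one_cons.
apply: ge0_le_integral_nonmeas => x _.
  by apply: integral_ge0 => y; exact: f0'.
apply: ge0_le_integral_nonmeas => y Iy; first exact: f0'.
by apply: IH => s s1; [apply/f0|apply/fg]; exact: below_one_cons.
Qed.

Lemma unif_expD_ge n f g : (forall s, below_one s -> 0 <= f s) ->
  (forall s, below_one s -> 0 <= g s) ->
  unif_exp n f + unif_exp n g <= unif_exp n (fun s => f s + g s).
Proof.
elim: n f g => [|n IH] f g f0 g0 //=.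
have f0' x y : unitI y -> 0 <= unif_exp n (fun s => f ((x, y) :: s)).
  by move=> Iy; apply: unif_exp_ge0 => s s1; apply/f0/below_one_cons.
have g0' x y : unitI y -> 0 <= unif_exp n (fun s => g ((x, y) :: s)).
  by move=> Iy; apply: unif_exp_ge0 => s s1; apply/g0/below_one_cons.
apply: le_trans; first apply: ge0_integralD_ge_nonmeas.
- by move=> x _; apply: integral_ge0 => y; exact: f0'.
- by move=> x _; apply: integral_ge0 => y; exact: g0'.
apply: ge0_le_integral_nonmeas => x _.
  by apply: adde_ge0; apply: integral_ge0 => y; [exact: f0'|exact: g0'].
apply: le_trans; first by apply: ge0_integralD_ge_nonmeas => y; [exact: f0'|exact: g0'].
apply: ge0_le_integral_nonmeas => y Iy; first by rewrite adde_ge0 ?f0' ?g0'.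
by apply: IH => s s1; [apply/f0|apply/g0]; exact: below_one_cons.
Qed.

Lemma unif_exp_sum_ge n (I : Type) (l : seq I) (F : I -> seq pt -> \bar R) :
  (forall j s, below_one s -> 0 <= F j s) ->
  \sum_(j <- l) unif_exp n (F j) <= unif_exp n (fun s => \sum_(j <- l) F j s).
Proof.
move=> F0; have sumF0 l' s : below_one s -> 0 <= \sum_(j <- l') F j s.
  by move=> s1; apply: sume_ge0 => j _; exact: F0.
elim: l => [|a l IH].
  by rewrite big_nil; apply: unif_exp_ge0 => s _; rewrite big_nil.
rewrite big_cons; apply: le_trans (leeD (lexx _) IH) _.
apply: le_trans (unif_expD_ge _ (F0 a) (sumF0 l)) _.
by apply: le_unif_exp => s s1; rewrite ?big_cons // adde_ge0 ?F0 ?sumF0.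
Qed.

End UniformExpectation.

Section UnitIntervalIntegrals.
Local Open Scope ereal_scope.
Variable R : realType.
Notation lam := (@lebesgue_measure R).

Lemma integral_unitI_cst (c : R) : \int[lam]_(x in @unitI R) c%:E = c%:E.
Proof.
rewrite integral_cst /=; last exact: measurable_itv.
by rewrite /unitI lebesgue_measure_itv /= lte01 oppr0 adde0 mule1.
Qed.

Lemma indic_itvE (a b x : R) : \1_(`[a, b]%classic) x = ((a <= x <= b)%R%:R : R).
Proof.
rewrite indicE /= set_itvE; congr (nat_of_bool _)%:R.
by apply/idP/idP => [/set_mem //|]; exact: mem_set.
Qed.

Lemma lebesgue_measure_itvcc (a b : R) : (a <= b)%R ->
  lam `[a, b]%classic = (b - a)%:E.
Proof.
move=> ab; rewrite lebesgue_measure_itv /= lte_fin; case: ltP => [_|ba].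
  by rewrite EFinB.
have -> : b = a by lra.
by rewrite subrr.
Qed.

Lemma integral_unitI_step (c e a b : R) : (0 <= c)%R -> (0 <= e)%R ->
  (0 <= a)%R -> (a <= b)%R -> (b <= 1)%R ->
  \int[lam]_(y in @unitI R) (c + e * \1_(`[a, b]%classic) y)%:E = (c + e * (b - a))%:E.
Proof.
move=> c0 e0 a0 ab b1; have mI : measurable (@unitI R) by exact: measurable_itv.
under eq_integral do rewrite EFinD.
rewrite ge0_integralD //; last 2 first.
- by move=> y _; rewrite lee_fin mulr_ge0.
- apply/measurable_realfun.measurable_EFinP/measurable_realfun.measurable_funM.
    exact: measurable_cst.
  exact: measurable_realfun.measurable_indic.
rewrite integral_unitI_cst (integralZl_indic (m := lam) mI (fun=> `[a, b]%classic)) //=;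
  last by rewrite ltNge e0.
rewrite integral_indic // setIidl; last first.
  by move=> y /=; rewrite /unitI /= !in_itv /= => /andP[h1 h2]; apply/andP; split; lra.
by rewrite EFinD EFinM; congr (_ + _ * _); exact: lebesgue_measure_itvcc.
Qed.

End UnitIntervalIntegrals.

Section HitBoxProbability.
Variable R : realType.
Notation lam := (@lebesgue_measure R).
Variables x1 x2 y1 y2 : R.

Definition box_area : R := (x2 - x1) * (y2 - y1).

Definition box_in_unit_square : Prop :=
  [/\ 0 <= x1 <= x2, x2 <= 1, 0 <= y1 <= y2 & y2 <= 1].

Lemma miss_box_pow01 n : box_in_unit_square -> 0 <= (1 - box_area) ^+ n <= 1.
Proof.
case=> /andP[? ?] ? /andP[? ?] ?; have a0 : 0 <= box_area by apply: mulr_ge0; lra.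
have a1 : box_area <= 1 by rewrite -[1]mulr1; apply: ler_pM; lra.
by rewrite exprn_ge0 ?exprn_ile1 //; lra.
Qed.

(* Induction on the number of sample points; the flag [b] records whether one
   of the points already drawn hit the box. *)
Lemma unif_exp_hit_box_or n (b : bool) : box_in_unit_square ->
  ((if b then 1 else 1 - (1 - box_area) ^+ n)%:E <=
   unif_exp n (fun s => (b || has (in_box x1 x2 y1 y2) s)%:R%:E))%E.
Proof.
move=> unit_box; elim: n b => [|n IH] b /=; first by case: b; rewrite ?expr0 ?subrr.
set C := 1 - (1 - box_area) ^+ n.
have C01 : 0 <= C <= 1 by have := miss_box_pow01 n unit_box; rewrite /C; lra.
apply: (@le_trans _ _ (\int[lam]_(x in @unitI R) \int[lam]_(y in @unitI R)
    (if b || in_box x1 x2 y1 y2 (x, y) then 1 else C)%:E)%E); last first.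
  have lb_ge0 b' : (0 <= (if b' then 1 else C)%:E)%E by rewrite lee_fin; case: b' => //; lra.
  apply: ge0_le_integral_nonmeas => x _; first exact: integral_ge0.
  apply: ge0_le_integral_nonmeas => y _ //.
  by apply: le_trans (IH _) _; under [X in (_ <= unif_exp _ X)%E]eq_fun => s do rewrite /= orbA.
case: b; first by under eq_integral do rewrite integral_unitI_cst; rewrite integral_unitI_cst.
case: unit_box => /andP[x1_ge0 x12] x2_le1 /andP[y1_ge0 y12] y2_le1.
have C0 : 0 <= C by lra.
have e0 (t : R) : 0 <= t -> 0 <= (1 - C) * t by move=> t0; apply: mulr_ge0; lra.
(* the integrand is the step function [C + (1 - C) 1_box] *)
rewrite (@eq_integral _ _ _ lam _
    (fun x => (C + (1 - C) * (y2 - y1) * \1_(`[x1, x2]%classic) x)%:E)).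
  rewrite integral_unitI_step ?e0 //; last by rewrite subr_ge0.
  by rewrite lee_fin /C /box_area exprSr; lra.
move=> x _; rewrite (@eq_integral _ _ _ lam _
    (fun y => (C + (1 - C) * ((x1 <= x <= x2)%R : bool)%:R * \1_(`[y1, y2]%classic) y)%:E)).
  rewrite integral_unitI_step ?e0 //.
  by rewrite indic_itvE; congr EFin; ring.
move=> y _; rewrite indic_itvE /in_box /=.
by case: (x1 <= x <= x2); case: (y1 <= y <= y2) => /=; congr EFin; ring.
Qed.

Lemma unif_exp_hit_box n : box_in_unit_square ->
  ((1 - (1 - box_area) ^+ n)%:E <=
   unif_exp n (fun s => (has (in_box x1 x2 y1 y2) s)%:R%:E))%E.
Proof. exact: unif_exp_hit_box_or n false. Qed.

End HitBoxProbability.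

Section ExpectedComplexity.
Variable R : realType.

Lemma bernoulli_ineq (a : R) (k : nat) : 0 <= a <= 1 ->
  (1 - a) ^+ k * (1 + k%:R * a) <= 1.
Proof.
move=> /andP[a0 a1]; elim: k => [|k IH]; first by rewrite expr0 mul0r addr0 mulr1.
have p0 : 0 <= (1 - a) ^+ k by apply: exprn_ge0; lra.
rewrite exprSr -mulrA; apply: le_trans IH; apply: ler_wpM2l => //.
by rewrite -natr1; have : 0 <= k%:R :> R by []; nra.
Qed.

Lemma one_sub_expr_le (a : R) (n : nat) : 0 <= a <= 1 -> 1 <= 16 * (n%:R * a) ->
  (1 - a) ^+ n <= 16 / 17.
Proof.
move=> a01 na; have := bernoulli_ineq n a01.
have : 0 <= (1 - a) ^+ n by apply: exprn_ge0; lra.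
nra.
Qed.

Lemma column_box_in_unit_square (w : R) (j : nat) : 0 < w -> j.+1%:R * w <= 1 ->
  box_in_unit_square (j%:R * w + w / 4) (j%:R * w + 3 * w / 4) (1 - w / 8) 1.
Proof.
rewrite -natr1 => w0 jw; have j0 : 0 <= j%:R :> R by [].
by split; [apply/andP; split | | apply/andP; split | ]; nra.
Qed.

Lemma count_EFin_sum (I : Type) (l : seq I) (P : pred I) :
  ((count P l)%:R%:E = \sum_(j <- l) (P j)%:R%:E :> \bar R)%E.
Proof.
rewrite -sum1_count natr_sum sumEFin big_mkcond /=.
by congr EFin; apply: eq_bigr => j _; case: (P j).
Qed.

Lemma expected_complexity_ge (m n : nat) : (0 < m)%N -> (m * m <= n)%N ->
  ((m%:R / 17)%:E <= unif_exp n (fun s => complexity (CH (@Dxy' R) (point_set s))))%E.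
Proof.
move=> m0 mn; set w : R := m%:R^-1.
have w0 : 0 < w by rewrite invr_gt0 ltr0n.
have mw : m%:R * w = 1 by rewrite mulfV // pnatr_eq0 -lt0n.
have m1 : 1 <= m%:R :> R by rewrite ler1n.
have w1 : w <= 1 by nra.
set a := w / 2 * (w / 8).
have miss : (1 - a) ^+ n <= 16 / 17.
  apply: one_sub_expr_le; first by rewrite /a; apply/andP; split; nra.
  have : (m * m)%:R <= n%:R :> R by rewrite ler_nat.
  by rewrite natrM /a => nm; nra.
apply: (@le_trans _ _ (\sum_(0 <= j < m) (1 - (1 - a) ^+ n)%:E)%E).
  by rewrite sumEFin sumr_const_nat subn0 lee_fin -mulr_natr; nra.
apply: (@le_trans _ _ (\sum_(0 <= j < m) unif_exp n
                        (fun s => (has (column_box w j) s)%:R%:E))%E).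
  rewrite !big_nat; apply: lee_sum => j /andP[_ jm].
  have -> : a = box_area (j%:R * w + w / 4) (j%:R * w + 3 * w / 4) (1 - w / 8) 1.
    by rewrite /box_area /a; field.
  apply/unif_exp_hit_box/column_box_in_unit_square => //.
  by rewrite -[X in _ <= X]mw ler_pM2r // ler_nat.
apply: le_trans (unif_exp_sum_ge _ _ _) _ => [j s _|]; first by rewrite lee_fin.
apply: le_unif_exp => [s _|s s1]; first by apply: sume_ge0 => j _; rewrite lee_fin.
rewrite -count_EFin_sum; apply: count_column_boxes_le_complexity => //.
  exact: iota_uniq.
by move=> q; move/allP: s1 => /(_ q).
Qed.

End ExpectedComplexity.

Lemma exists_nat_sqrt (n : nat) : exists m, (m * m <= n < m.+1 * m.+1)%N.
Proof.
elim: n => [|n [m hm]]; first by exists 0%N.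
by case: (ltnP n.+1 (m.+1 * m.+1)) => h; [exists m | exists m.+1]; lia.
Qed.

Lemma sqrt_natr_le (R : realType) (n k : nat) : (n <= k * k)%N ->
  Num.sqrt n%:R <= k%:R :> R.
Proof.
move=> nk; rewrite -[k%:R]ger0_norm // -sqrtr_sqr ler_sqrt ?exprn_ge0 //.
by rewrite expr2 -natrM ler_nat.
Qed.

Theorem corollary3p14 (R : realType) :
  exists c : R, 0 < c /\ exists n0 : nat, forall n : nat, (n0 <= n)%N ->
    ((c * Num.sqrt n%:R)%:E <=
     unif_exp n (fun s => complexity (CH (@Dxy' R) (point_set s))))%E.
Proof.
exists (1 / 34); split => //; exists 1%N => n n1.
have [m /andP[mn nm]] := exists_nat_sqrt n.
have m0 : (0 < m)%N by case: m mn nm => //; lia.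
apply: le_trans (expected_complexity_ge R m0 mn); rewrite lee_fin.
have : Num.sqrt n%:R <= (2 * m)%:R :> R by apply: sqrt_natr_le; nia.
by rewrite natrM; lra.
Qed.
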